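(* Let $(X_k)_{k\ge0}$ be a random walk with $X_0=0$, $\mathbb{P}[X_{k+1}=X_k+1]=q$ and $\mathbb{P}[X_{k+1}=X_k-1]=p$, where $p+q=1$ and $q<p$. Let $\nu=\inf\{i\ge0: X_i=-1\}$ and for $n\ge0$ let $$u_n(X)=\sum_{i=1}^{\nu}\mathbf 1_{(X_i<n)\wedge(X_i<X_{i-1})},\qquad v_n(X)=\sum_{i=1}^{\nu}X_i\,\mathbf 1_{(X_i<n)\wedge(X_i<X_{i-1})}.$$ Then $$\mathbb{E}[u_n(X)]=\frac{p}{p-q}\Bigl(1-\Bigl(\frac qp\Bigr)^{n+1}\Bigr),\qquad \mathbb{E}[v_n(X)]=\frac{p}{(p-q)^2}\Bigl(2q-p-\bigl(q+n(p-q)\bigr)\Bigl(\frac qp\Bigr)^{n+1}\Bigr).$$ *)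

From HB Require Import structures.
From mathcomp Require Import all_boot all_order all_algebra.
From mathcomp Require Import all_classical all_reals all_analysis.
Set Implicit Arguments. Unset Strict Implicit. Unset Printing Implicit Defensive.
Import Order.TTheory GRing.Theory Num.Theory.
Local Open Scope classical_set_scope.
Local Open Scope ring_scope.

Section Walk.
Variables (R : realType) (T : Type) (xi : nat -> T -> R).

Definition walk (k : nat) (t : T) : R := \sum_(j < k) xi j t.

Definition hits (t : T) : Prop := exists i, walk i t = -1.

Lemma hits_exP t : hits t -> exists i, (fun i => walk i t == -1) i.
Proof. by move=> [i Hi]; exists i; apply/eqP. Qed.

(* nu = inf {i >= 0 : X_i = -1}; only meaningful on [hits]; the convention
   nu := 0 off [hits] is irrelevant since that event is P-null when q < p *)
Definition nu (t : T) : nat :=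
  match pselect (hits t) with
  | left H => ex_minn (hits_exP H)
  | right _ => 0%N
  end.

Definition down_below (n : nat) (i : nat) (t : T) : bool :=
  (walk i t < n%:R) && (walk i t < walk i.-1 t).

Definition u_n (n : nat) (t : T) : R :=
  \sum_(1 <= i < (nu t).+1) (down_below n i t)%:R.

Definition v_n (n : nat) (t : T) : R :=
  \sum_(1 <= i < (nu t).+1) walk i t * (down_below n i t)%:R.

End Walk.

(* law of the steps: i.i.d. with P(step = +1) = q, P(step = -1) = p,
   expressed as the joint law of every finite initial segment of steps *)
Definition step_law (R : realType) (d : measure_display) (T : measurableType d)
  (P : probability T R) (xi : nat -> T -> R) (p q : R) : Prop :=
  forall (k : nat) (s : k.-tuple bool),
    P [set t : T | forall i : 'I_k, xi i t = (if tnth s i then 1 else -1)] =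
    (\prod_(i < k) (if tnth s i then q else p))%:E.

(* Up to its hitting time of -1, the walk is the walk on [nat] killed on
   stepping below 0, driven by the sequence of its steps; over the first K
   steps its law is the product expectation [Ebern K].  A summand of u_n or
   v_n is a reward phi(x) collected at a down-step from height x, with
   phi x = [x <= n] for u_n and phi x = x [x <= n] for u_n + v_n.  The mean
   reward g(x) collected from height x before absorption is a geometric sum
   in q/p solving the first-step equations, so the mean reward of the first K
   steps is g(0) - E[alive after K steps * g(level)].  As the drift q - p is
   negative, the survival probability after K steps is O(1/K); hence -1 is
   hit almost surely, and monotone convergence gives E[reward] = g(0). *)

From HB Require Import structures.
From mathcomp Require Import all_boot all_order all_algebra.
From mathcomp Require Import all_classical all_reals all_analysis.
From mathcomp Require Import ring lra measurable_realfun.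
Import Order.TTheory GRing.Theory Num.Theory.
Import numFieldNormedType.Exports.
Local Open Scope classical_set_scope.
Local Open Scope ring_scope.
Set Implicit Arguments. Unset Strict Implicit. Unset Printing Implicit Defensive.

Section BernoulliExpectation.
Variables (R : numDomainType) (p q : R).

(* [true] is an up-step, of probability [q]. *)
Fixpoint Ebern (K : nat) (F : seq bool -> R) : R :=
  if K is K'.+1 then
    q * Ebern K' (fun s => F (true :: s)) + p * Ebern K' (fun s => F (false :: s))
  else F [::].

Lemma eq_Ebern_size K F G :
  (forall s, size s = K -> F s = G s) -> Ebern K F = Ebern K G.
Proof.
elim: K F G => [|K IH] F G /= FG; first by rewrite FG.
by congr (_ * _ + _ * _); apply: IH => s hs; rewrite FG //= hs.
Qed.

Lemma eq_Ebern K F G : F =1 G -> Ebern K F = Ebern K G.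
Proof. by move=> FG; apply: eq_Ebern_size => s _. Qed.

Lemma EbernD K F G : Ebern K (fun s => F s + G s) = Ebern K F + Ebern K G.
Proof. by elim: K F G => [|K IH] F G //=; rewrite !IH; ring. Qed.

Lemma EbernZ K a F : Ebern K (fun s => a * F s) = a * Ebern K F.
Proof. by elim: K F => [|K IH] F //=; rewrite !IH; ring. Qed.

Definition bern_weight K (s : K.-tuple bool) : R :=
  \prod_(i < K) (if tnth s i then q else p).

Lemma Ebern_sumE K F : Ebern K F = \sum_(s : K.-tuple bool) F s * bern_weight s.
Proof.
elim: K F => [|K IH] F /=.
  rewrite (big_pred1 [tuple]) ?/bern_weight ?big_ord0 ?mulr1 // => s.
  by apply/esym/eqP; exact: tuple0.
pose cons_t (bs : bool * K.-tuple bool) : K.+1.-tuple bool := [tuple of bs.1 :: bs.2].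
have cons_tK : bijective cons_t.
  exists (fun s => (thead s, [tuple of behead s])).
    by move=> [b s]; congr pair; apply: val_inj.
  by move=> s; apply: val_inj; rewrite /= [in RHS](tuple_eta s).
rewrite (reindex cons_t) /=; last by apply: onW_bij.
rewrite -(pair_big xpredT xpredT (fun b s => F (cons_t (b, s)) * bern_weight (cons_t (b, s)))).
rewrite /= big_bool /= !IH !big_distrr /=; congr (_ + _); apply: eq_bigr => s _;
  rewrite /bern_weight big_ord_recl tnth0 mulrCA;
  by congr (_ * (_ * _)); apply: eq_bigr => i _; rewrite tnthS.
Qed.

Hypothesis hpq : p + q = 1.

Lemma Ebern_cst K c : Ebern K (fun=> c) = c.
Proof. by elim: K => [|K IH] //=; rewrite IH -mulrDl addrC hpq mul1r. Qed.

Hypotheses (hp : 0 <= p) (hq : 0 <= q).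

Lemma ler_Ebern K F G : (forall s, F s <= G s) -> Ebern K F <= Ebern K G.
Proof.
by elim: K F G => [|K IH] F G FG //=; rewrite lerD // ler_wpM2l // IH.
Qed.

Lemma Ebern_ge0 K F : (forall s, 0 <= F s) -> 0 <= Ebern K F.
Proof. by move=> F0; rewrite -(Ebern_cst K 0); apply: ler_Ebern. Qed.

End BernoulliExpectation.

(* The walk on [nat] started at [x] driven by the steps [s] and killed when it
   steps down from [0]: [alive] says it survives all of [s], [level] is its
   final height ([0] once killed), [life] counts the steps taken up to and
   including the killing one, and [reward phi] adds [phi y] at every down-step
   from height [y], the killing step included. *)
Fixpoint alive (x : nat) (s : seq bool) : bool :=
  if s is b :: s' then
    if b then alive x.+1 s' else if x is y.+1 then alive y s' else false
  else true.

Fixpoint level (x : nat) (s : seq bool) : nat :=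
  if s is b :: s' then
    if b then level x.+1 s' else if x is y.+1 then level y s' else 0
  else x.

Fixpoint life (x : nat) (s : seq bool) : nat :=
  if s is b :: s' then
    (if b then life x.+1 s' else if x is y.+1 then life y s' else 0).+1
  else 0.

Fixpoint reward (R : nmodType) (phi : nat -> R) (x : nat) (s : seq bool) : R :=
  if s is b :: s' then
    if b then reward phi x.+1 s'
    else phi x + (if x is y.+1 then reward phi y s' else 0)
  else 0.

Lemma sum_nat_trunc (R : nzSemiRingType) (psi : nat -> R) (m K : nat) : (m <= K)%N ->
  \sum_(1 <= i < K.+1) (i <= m)%:R * psi i = \sum_(1 <= i < m.+1) psi i.
Proof.
move=> hK; rewrite (big_cat_nat (n := m.+1)) //= [X in _ + X]big_nat_cond.
rewrite [X in _ + X]big1 ?addr0 => [|i /andP[/andP[hi _] _]]; last by rewrite leqNgt hi mul0r.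
rewrite big_nat_cond [RHS]big_nat_cond; apply: eq_bigr => i /andP[/andP[_ /[!ltnS] ->] _].
exact: mul1r.
Qed.

Lemma life_alive x s : alive x s -> life x s = size s.
Proof. by elim: s x => [|[] s IH] [|x] //= H; rewrite IH. Qed.

Lemma alive_rcons x s b : alive x (rcons s b) = alive x s && (b || (0 < level x s)%N).
Proof. by elim: s x => [|[] s IH] [|x] //=; case: b. Qed.

Lemma level_rcons x s b :
  alive x s -> level x (rcons s b) = if b then (level x s).+1 else (level x s).-1.
Proof. by elim: s x => [|[] s IH] [|x] //= H; rewrite IH. Qed.

Lemma reward_rcons (R : nzSemiRingType) (phi : nat -> R) x s b :
  reward phi x (rcons s b) = reward phi x s + (alive x s)%:R * (if b then 0 else phi (level x s)).
Proof.
by elim: s x => [|[] s IH] [|x] /=; rewrite ?mul1r ?mul0r ?add0r ?addr0 ?IH ?addrA.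
Qed.

Lemma reward_ge0 (R : numDomainType) (phi : nat -> R) x s :
  (forall y, 0 <= phi y) -> 0 <= reward phi x s.
Proof. by move=> phi0; elim: s x => [|[] s IH] [|x] //=; rewrite ?addr0 // addr_ge0. Qed.

Section NegativeDrift.
Variables (R : realType) (p q : R).
Hypotheses (hq : 0 <= q) (hqp : q < p) (hpq : p + q = 1).

Let hp : 0 <= p. Proof. exact/ltW/(le_lt_trans hq hqp). Qed.
Let hpq_gt0 : 0 < p - q. Proof. by rewrite subr_gt0. Qed.

(* Height plus one plus [(p - q)] times elapsed time is a martingale, and
   [potential] is it stopped at death, where the height is [-1]. *)
Definition potential x s : R :=
  (alive x s)%:R * ((level x s)%:R + 1) + (p - q) * (life x s)%:R.

Lemma potential_up x s : potential x (true :: s) = potential x.+1 s + (p - q).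
Proof. by rewrite /potential /= -natr1; ring. Qed.

Lemma potential_down x s :
  potential x (false :: s) = (if x is y.+1 then potential y s else 0) + (p - q).
Proof. by case: x => [|x]; rewrite /potential /= -?natr1; ring. Qed.

Lemma Ebern_potential K x : Ebern p q K (potential x) = x%:R + 1.
Proof.
elim: K x => [|K IH] x; first by rewrite /= /potential mul1r mulr0 addr0.
rewrite /= (eq_Ebern _ _ _ (potential_up x)) (eq_Ebern _ _ _ (potential_down x)).
rewrite EbernD (Ebern_cst hpq) IH EbernD (Ebern_cst hpq).
case: x => [|x] /=; rewrite ?(Ebern_cst hpq) ?IH.
  by rewrite (_ : q = 1 - p); [ring | rewrite -hpq; ring].
by rewrite -natr1 (_ : q = 1 - p); [ring | rewrite -hpq; ring].
Qed.

Lemma Ebern_alive_tail K x :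
  K%:R * Ebern p q K (fun s => (alive x s)%:R) <= (x%:R + 1) / (p - q).
Proof.
rewrite ler_pdivlMr // -(Ebern_potential K x) mulrC -!EbernZ.
rewrite [leLHS](@eq_Ebern_size _ p q K _ (fun s => (p - q) * ((size s)%:R * (alive x s)%:R)));
  last by move=> s ->.
apply: (ler_Ebern hp hq) => s; rewrite /potential; case: (boolP (alive x s)) => A.
  by rewrite life_alive // !mulr1 mul1r lerDr addr_ge0.
by rewrite !mulr0 mul0r add0r mulr_ge0 // ltW.
Qed.

Lemma Ebern_alive_cvg0 x : (fun K => Ebern p q K (fun s => (alive x s)%:R)) @ \oo --> 0.
Proof.
rewrite -cvg_shiftS; set c := (x%:R + 1) / (p - q).
apply: (@squeeze_cvgr _ _ _ _ (cst 0) (c *: @harmonic R)); last 2 first.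
- exact: cvg_cst.
- by rewrite -(scaler0 _ c); exact: (cvgZl_tmp cvg_harmonic).
near=> K; apply/andP; split; first exact: (Ebern_ge0 hpq hp hq).
change (Ebern p q K.+1 (fun s => (alive x s)%:R) <= c * K.+1%:R^-1).
by rewrite ler_pdivlMr // mulrC Ebern_alive_tail.
Unshelve. all: by end_near. Qed.

End NegativeDrift.

Section AbsorptionReward.
Variables (R : realType) (p q : R) (n : nat) (phi : nat -> R).
Hypotheses (hq : 0 <= q) (hqp : q < p) (hpq : p + q = 1).
Hypotheses (phi_ge0 : forall x, 0 <= phi x) (phi_eq0 : forall x, (n < x)%N -> phi x = 0).

Let hp : 0 < p. Proof. exact: le_lt_trans hq hqp. Qed.

(* [excursion x] is the mean reward collected from height [x] before first
   reaching [x - 1], and [absorption x] the mean reward collected before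
   absorption. *)
Definition excursion x : R := \sum_(0 <= m < n.+1) (q / p) ^+ m * phi (x + m).

Definition absorption x : R := \sum_(0 <= y < x.+1) excursion y.

Lemma excursion_ge0 x : 0 <= excursion x.
Proof.
by apply: sumr_ge0 => m _; rewrite mulr_ge0 // exprn_ge0 // divr_ge0 // ltW.
Qed.

Lemma excursion_eq0 x : (n < x)%N -> excursion x = 0.
Proof. by move=> hx; apply: big1 => m _; rewrite phi_eq0 ?mulr0 // ltn_addr. Qed.

Lemma excursion_rec x : p * excursion x = p * phi x + q * excursion x.+1.
Proof.
rewrite /excursion big_nat_recl // big_nat_recr //= expr0 mul1r addn0.
rewrite (phi_eq0 (x := x.+1 + n)) ?mulr0 ?addr0; last by rewrite addSn ltnS leq_addl.
rewrite mulrDr big_distrr big_distrr /=; congr (_ + _); apply: eq_bigr => m _.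
by rewrite exprS addSn addnS; field; rewrite gt_eqF.
Qed.

Lemma absorption0 : absorption 0 = \sum_(0 <= m < n.+1) (q / p) ^+ m * phi m.
Proof. by rewrite /absorption big_nat1; apply: eq_bigr => m _; rewrite add0n. Qed.

Lemma absorptionS x : absorption x.+1 = absorption x + excursion x.+1.
Proof. exact: big_nat_recr. Qed.

Lemma absorption_rec0 : absorption 0 = q * absorption 1 + p * phi 0.
Proof.
rewrite absorptionS /absorption big_nat1 mulrDr -addrA [_ + p * _]addrC -excursion_rec.
by rewrite -mulrDl addrC hpq mul1r.
Qed.

Lemma absorption_recS x :
  absorption x.+1 = q * absorption x.+2 + p * (phi x.+1 + absorption x).
Proof.
have := excursion_rec x.+1; rewrite !absorptionS => E.
have qE : q = 1 - p by rewrite -hpq; ring.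
by rewrite qE in E *; nra.
Qed.

Lemma absorption_ge0 x : 0 <= absorption x.
Proof. by apply: sumr_ge0 => y _; exact: excursion_ge0. Qed.

Lemma absorption_le x : absorption x <= absorption n.
Proof.
rewrite /absorption; case: (leqP x n) => hx.
  by rewrite [leRHS](big_cat_nat (n := x.+1)) //= lerDl sumr_ge0 // => y _; exact: excursion_ge0.
rewrite [leLHS](big_cat_nat (n := n.+1)) 1?ltnW //= [X in _ + X]big_nat_cond.
by rewrite [X in _ + X]big1 ?addr0 // => y /andP[/andP[hy _] _]; exact: excursion_eq0.
Qed.

(* [absorption] solves the first-step equations of the killed walk. *)
Lemma Ebern_reward K x :
  Ebern p q K (reward phi x) + Ebern p q K (fun s => (alive x s)%:R * absorption (level x s))
  = absorption x.
Proof.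
elim: K x => [|K IH] x /=; first by rewrite add0r mul1r.
case: x => [|x] /=.
  by rewrite !(Ebern_cst hpq) addr0 mul0r absorption_rec0 -(IH 1%N); ring.
by rewrite absorption_recS -(IH x.+2) -(IH x) EbernD (Ebern_cst hpq); ring.
Qed.

Lemma Ebern_reward_cvg : (fun K => Ebern p q K (reward phi 0)) @ \oo --> absorption 0.
Proof.
set rest := fun K => Ebern p q K (fun s => (alive 0 s)%:R * absorption (level 0 s)).
have -> : (fun K => Ebern p q K (reward phi 0)) = (fun K => absorption 0 - rest K).
  by apply/funext => K; rewrite -(Ebern_reward K 0) addrK.
rewrite -[X in _ --> X]subr0; apply: cvgB; first exact: cvg_cst.
apply: (@squeeze_cvgr _ _ _ _ (cst 0)
  (fun K => absorption n * Ebern p q K (fun s => (alive 0 s)%:R))); last 2 first.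
- exact: cvg_cst.
- by rewrite -(mulr0 (absorption n)); apply: cvgMl_tmp; exact: Ebern_alive_cvg0.
near=> K; apply/andP; split.
  by apply: (Ebern_ge0 hpq (ltW hp) hq) => s; rewrite mulr_ge0 ?absorption_ge0.
rewrite -EbernZ; apply: (ler_Ebern (ltW hp) hq) => s.
by rewrite mulrC ler_wpM2r ?absorption_le.
Unshelve. all: by end_near. Qed.

End AbsorptionReward.

Section ClosedForms.
Variables (R : realType) (p q : R).
Hypotheses (hq : 0 <= q) (hqp : q < p).

Let hp : p != 0. Proof. by rewrite gt_eqF // (le_lt_trans hq hqp). Qed.
Let hpq : p - q != 0. Proof. by rewrite gt_eqF // subr_gt0. Qed.

Lemma sum_ratio_exp n :
  \sum_(0 <= m < n.+1) (q / p) ^+ m = p / (p - q) * (1 - (q / p) ^+ n.+1).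
Proof.
elim: n => [|n IH]; first by rewrite big_nat1 expr0 expr1; field; rewrite ?hp ?hpq.
by rewrite big_nat_recr //= IH [(q / p) ^+ n.+2]exprS; field; rewrite ?hp ?hpq.
Qed.

Lemma sum_ratio_exp_predn n :
  \sum_(0 <= m < n.+1) (q / p) ^+ m * (m%:R - 1) =
  p / (p - q) ^+ 2 * (2 * q - p - (q + n%:R * (p - q)) * (q / p) ^+ n.+1).
Proof.
elim: n => [|n IH]; first by rewrite big_nat1 expr0 expr1 /=; field; rewrite ?hp ?hpq.
rewrite big_nat_recr //= IH [(q / p) ^+ n.+2]exprS -natr1.
by field; rewrite ?hp ?hpq.
Qed.

End ClosedForms.

Section StepProcess.
Variables (R : realType) (d : measure_display) (T : measurableType d)
  (P : probability T R) (xi : nat -> T -> R) (p q : R).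
Hypotheses (hq : 0 <= q) (hqp : q < p) (hpq : p + q = 1).
Hypotheses (xi_meas : forall i, measurable_fun setT (xi i)) (hlaw : step_law P xi p q).

Definition cyl K (s : K.-tuple bool) : set T :=
  [set t | forall i : 'I_K, xi i t = (if tnth s i then 1 else -1)].

Definition unit_steps K : set T := [set t | forall i : 'I_K, xi i t = 1 \/ xi i t = -1].

Definition unit_walk : set T := [set t | forall i, xi i t = 1 \/ xi i t = -1].

Definition steps K t : seq bool := [seq xi i t == 1 | i <- iota 0 K].

Definition steps_tuple K t : K.-tuple bool := [tuple xi i t == 1 | i < K].

Lemma steps_tupleE K t : tval (steps_tuple K t) = steps K t.
Proof. by rewrite /steps_tuple /steps /= -val_enum_ord -map_comp. Qed.

Lemma steps_rcons K t : steps K.+1 t = rcons (steps K t) (xi K t == 1).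
Proof. by rewrite /steps -addn1 iotaD map_cat /= cats1. Qed.

Let N1_neq1 : (-1 : R) == 1 = false.
Proof. by apply/negbTE/eqP => H; lra. Qed.

Lemma cylP K (s : K.-tuple bool) t : cyl s t <-> unit_steps K t /\ s = steps_tuple K t.
Proof.
split=> [H|[U ->] i]; last by rewrite tnth_mktuple; case: (U i) => ->; rewrite ?eqxx ?N1_neq1.
split=> [i|]; first by rewrite H; case: (tnth s i); [left | right].
by apply: eq_from_tnth => i; rewrite tnth_mktuple H; case: (tnth s i); rewrite ?eqxx ?N1_neq1.
Qed.

Definition cylf K (F : seq bool -> R) (t : T) : \bar R :=
  (\sum_(s : K.-tuple bool) (F s * \1_(cyl s) t)%:E)%E.

Lemma cylfE K F t : unit_steps K t -> cylf K F t = (F (steps K t))%:E.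
Proof.
move=> U; rewrite /cylf sumEFin (bigD1 (steps_tuple K t)) //= big1 ?addr0.
  by rewrite indicE mem_set ?mulr1 ?steps_tupleE //; apply/cylP.
move=> s hs; rewrite indicE memNset ?mulr0 // => /cylP [_ E].
by rewrite E eqxx in hs.
Qed.

Lemma cylf_out K F t : ~ unit_steps K t -> cylf K F t = 0%E.
Proof.
move=> U; rewrite /cylf big1 // => s _.
by rewrite indicE memNset ?mulr0 // => /cylP [].
Qed.

Lemma cylf_ge0 K F t : (forall s, 0 <= F s) -> (0 <= cylf K F t)%E.
Proof. by move=> F0; apply: sume_ge0 => s _; rewrite lee_fin mulr_ge0. Qed.

Lemma measurable_xi_eq i (c : R) : measurable [set t | xi i t = c].
Proof. by have := xi_meas i measurableT (measurable_set1 c); rewrite setTI. Qed.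

Lemma measurable_cyl K (s : K.-tuple bool) : measurable (cyl s).
Proof.
have -> : cyl s = \bigcap_(i in [set i | (i < K)%N])
    [set t | xi i t = (if nth false s i then 1 else -1)].
  apply/seteqP; split=> t H => [i /= hi|i]; rewrite ?(tnth_nth false).
    by have := H (Ordinal hi); rewrite (tnth_nth false).
  exact: (H _ (ltn_ord i)).
by apply: bigcap_measurableType => i _; exact: measurable_xi_eq.
Qed.

Lemma measurable_unit_steps K : measurable (unit_steps K).
Proof.
have -> : unit_steps K = \bigcap_(i in [set i | (i < K)%N])
    ([set t | xi i t = 1] `|` [set t | xi i t = -1]).
  apply/seteqP; split=> t H => [i /= hi|i]; first exact: (H (Ordinal hi)).
  exact: (H _ (ltn_ord i)).
by apply: bigcap_measurableType => i _; apply: measurableU; exact: measurable_xi_eq.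
Qed.

Lemma measurable_cylf K F D : measurable_fun D (cylf K F).
Proof.
apply: emeasurable_sum => s; apply/measurable_EFinP.
by apply: measurable_funM => //; apply: measurable_indic; exact: measurable_cyl.
Qed.

Lemma integral_cylf K F : (forall s, 0 <= F s) ->
  (\int[P]_t cylf K F t = (Ebern p q K F)%:E)%E.
Proof.
move=> F0; rewrite /cylf ge0_integral_sum //; first last.
- by move=> s t _; rewrite lee_fin mulr_ge0.
- move=> s; apply/measurable_EFinP.
  by apply: measurable_funM => //; apply: measurable_indic; exact: measurable_cyl.
rewrite Ebern_sumE -sumEFin; apply: eq_bigr => s _.
under eq_integral do rewrite EFinM.
rewrite ge0_integralZl_EFin //; last first.
  by apply/measurable_EFinP; apply: measurable_indic; exact: measurable_cyl.
rewrite integral_indic ?setIT ?EFinM //; last exact: measurable_cyl.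
by congr (_ * _)%E; exact: hlaw.
Qed.

Lemma P_unit_steps K : P (unit_steps K) = 1%E.
Proof.
have mU := measurable_unit_steps K.
rewrite -(setIT (unit_steps K)) -integral_indic // -(Ebern_cst hpq K 1) -integral_cylf //.
apply: eq_integral => t _; rewrite indicE; case: (boolP (t \in unit_steps K)) => U.
  by rewrite cylfE //; exact: set_mem.
by rewrite cylf_out // => /mem_set; exact/negP.
Qed.

Lemma P_not_unit_steps K : P (~` unit_steps K) = 0%E.
Proof.
by rewrite probability_setC ?P_unit_steps ?subee //; exact: measurable_unit_steps.
Qed.

Lemma negligible_not_unit_walk : P.-negligible (~` unit_walk).
Proof.
apply: (negligibleS (A := \bigcup_K ~` unit_steps K)).
  move=> t /= /existsNP [i Hi]; exists i.+1 => // U.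
  exact: Hi (U (Ordinal (ltnSn i))).
apply: negligible_bigcup => K; apply/negligibleP; last exact: P_not_unit_steps.
exact/measurableC/measurable_unit_steps.
Qed.

Lemma walk0 t : walk xi 0 t = 0.
Proof. by rewrite /walk big_ord0. Qed.

Lemma walkS i t : walk xi i.+1 t = walk xi i t + xi i t.
Proof. by rewrite /walk big_ord_recr. Qed.

Lemma nu_spec t : hits xi t ->
  walk xi (nu xi t) t = -1 /\ forall j, (j < nu xi t)%N -> walk xi j t != -1.
Proof.
rewrite /nu; case: pselect => // H _; case: ex_minnP => m /eqP Hm Hmin.
by split => // j hj; apply/negP => /Hmin; rewrite leqNgt hj.
Qed.

Lemma nu_nhits t : ~ hits xi t -> nu xi t = 0%N.
Proof. by rewrite /nu; case: pselect. Qed.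

Lemma alive_steps t K : unit_walk t ->
  (alive 0 (steps K t) <-> forall j, (j <= K)%N -> walk xi j t != -1) /\
  (alive 0 (steps K t) -> walk xi K t = (level 0 (steps K t))%:R).
Proof.
move=> U; elim: K => [|K [IH1 IH2]].
  split=> //=; last by rewrite walk0.
  by split=> // _ j; rewrite leqn0 => /eqP ->; rewrite walk0 eq_sym oppr_eq0 oner_eq0.
rewrite steps_rcons alive_rcons; set s := steps K t.
have stepK : alive 0 s -> walk xi K.+1 t = (level 0 s)%:R + xi K t.
  by move=> A; rewrite walkS IH2.
split; last first.
  move=> /andP[A B]; rewrite level_rcons // stepK //.
  case: (U K) => X; rewrite X ?eqxx -?natr1 //.
  move: B; rewrite X N1_neq1 /=.
  by case: (level 0 s) => // L _; rewrite -natr1 addrK.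
split=> [/andP[A B] j|H].
  rewrite leq_eqVlt => /orP[/eqP ->|]; last by rewrite ltnS; exact: IH1.1.
  rewrite stepK //; case: (U K) => X; rewrite X; first by rewrite gt_eqF // ltr_wpDl.
  move: B; rewrite X N1_neq1 /= lt0n => /negPf L0.
  by rewrite -subr_eq0 addrK pnatr_eq0 L0.
have A : alive 0 s by apply/IH1 => j hj; apply: H; exact: (leq_trans hj).
rewrite A /=; case: (U K) => X; rewrite X ?eqxx //= N1_neq1 /=.
have := H K.+1 (leqnn _); rewrite stepK // X.
by case: (level 0 s) => //=; rewrite add0r eqxx.
Qed.

Definition unit_hits : set T := unit_walk `&` hits xi.

Lemma alive_steps_nu t K : unit_hits t -> alive 0 (steps K t) = (K < nu xi t)%N.
Proof.
move=> [U H]; have [N1 N2] := nu_spec H.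
apply/idP/idP => [/(alive_steps K U).1 A | hK].
  by rewrite ltnNge; apply/negP => /A; rewrite N1 eqxx.
by apply/(alive_steps K U).1 => j hj; apply: N2; exact: leq_ltn_trans hj hK.
Qed.

Lemma reward_steps (phi psi : nat -> R) t : unit_hits t ->
  (forall i (x : nat), walk xi i t = x%:R -> psi i.+1 = if xi i t == 1 then 0 else phi x) ->
  forall K, (nu xi t <= K)%N -> reward phi 0 (steps K t) = \sum_(1 <= i < (nu xi t).+1) psi i.
Proof.
move=> Ht Hpsi K hK; rewrite -(sum_nat_trunc psi hK); elim: K {hK} => [|K IH].
  by rewrite big_geq.
rewrite steps_rcons reward_rcons IH [RHS]big_nat_recr //=; congr (_ + _).
rewrite (alive_steps_nu K Ht); case: ltnP => hK; rewrite ?mul0r ?mul1r //.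
by rewrite (Hpsi K (level 0 (steps K t))) // (alive_steps K Ht.1).2 // alive_steps_nu.
Qed.

Lemma reward_steps_mono (phi : nat -> R) t : (forall x, 0 <= phi x) ->
  {homo (fun K => reward phi 0 (steps K t)) : K m / (K <= m)%N >-> K <= m}.
Proof.
move=> phi0; apply/nondecreasing_seqP => K.
by rewrite steps_rcons reward_rcons lerDl mulr_ge0 //; case: ifP.
Qed.

Lemma measurable_walk i : measurable_fun setT (walk xi i).
Proof. by apply: measurable_sum => j; exact: xi_meas. Qed.

Lemma measurable_walk_eq i (c : R) : measurable [set t | walk xi i t = c].
Proof. by have := measurable_walk i measurableT (measurable_set1 c); rewrite setTI. Qed.

Lemma measurable_unit_walk : measurable unit_walk.
Proof.
rewrite (_ : unit_walk = \bigcap_i ([set t | xi i t = 1] `|` [set t | xi i t = -1])).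
  by apply: bigcapT_measurable => i; apply: measurableU; exact: measurable_xi_eq.
by apply/seteqP; split=> t H => [i _|i]; exact: H.
Qed.

Lemma measurable_hits : measurable (hits xi).
Proof.
rewrite (_ : hits xi = \bigcup_i [set t | walk xi i t = -1]).
  by apply: bigcupT_measurable => i; exact: measurable_walk_eq.
by apply/seteqP; split=> t [i]; exists i.
Qed.

Lemma measurable_unit_hits : measurable unit_hits.
Proof. exact: measurableI measurable_unit_walk measurable_hits. Qed.

Lemma measurable_unit_nohits : measurable (unit_walk `&` ~` hits xi).
Proof. exact/measurableI/measurableC/measurable_hits/measurable_unit_walk. Qed.

Lemma P_unit_nohits_le K :
  (P (unit_walk `&` ~` hits xi) <= (Ebern p q K (fun s => (alive 0 s)%:R))%:E)%E.
Proof.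
rewrite -(setIT (_ `&` _)) -integral_indic //; last exact: measurable_unit_nohits.
rewrite -integral_cylf //; apply: ge0_le_integral => //.
- by apply/measurable_EFinP/measurable_indic; exact: measurable_unit_nohits.
- exact: measurable_cylf.
move=> t _; rewrite indicE; case: (boolP (t \in _)) => [/set_mem [U NH]|_].
  rewrite cylfE => [|i]; last exact: U.
  rewrite lee_fin; suff -> : alive 0 (steps K t) by [].
  by apply/(alive_steps K U).1 => j _; apply/eqP => Hj; apply: NH; exists j.
by rewrite cylf_ge0.
Qed.

Lemma P_unit_nohits : P (unit_walk `&` ~` hits xi) = 0%E.
Proof.
have fin : P (unit_walk `&` ~` hits xi) \is a fin_num.
  by rewrite ge0_fin_numE // (le_lt_trans (probability_le1 P measurable_unit_nohits)) ?ltry.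
rewrite -(fineK fin); congr EFin; apply/eqP; rewrite eq_le fine_ge0 // andbT.
apply: (ler_cvg_to (cvg_cst _) (Ebern_alive_cvg0 hq hqp hpq 0)).
by apply: nearW => K; rewrite -lee_fin fineK // P_unit_nohits_le.
Qed.

Lemma P_not_unit_hits : P (~` unit_hits) = 0%E.
Proof.
apply/negligibleP; first exact/measurableC/measurable_unit_hits.
apply: (negligibleS (A := ~` unit_walk `|` (unit_walk `&` ~` hits xi))).
  move=> t /= Ht; case: (pselect (unit_walk t)) => U; last by left.
  by right; split=> // H; exact: Ht.
apply: negligibleU; first exact: negligible_not_unit_walk.
by apply/negligibleP; [exact: measurable_unit_nohits | exact: P_unit_nohits].
Qed.

Lemma measurable_natr_bool (b : T -> bool) :
  measurable_fun setT b -> measurable_fun setT (fun t => (b t)%:R : R).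
Proof. by move=> mb; exact: (measurableT_comp (f := fun x : bool => x%:R : R)). Qed.

Lemma measurable_le_nu i : measurable_fun setT (fun t => (i <= nu xi t)%N).
Proof.
case: i => [|i]; first exact: measurable_cst.
apply: (measurable_fun_bool true).
rewrite (_ : _ `&` _ =
    hits xi `&` \bigcap_(j in [set j | (j <= i)%N]) ~` [set t | walk xi j t = -1]).
  apply: measurableI; first exact: measurable_hits.
  by apply: bigcap_measurableType => j _; apply: measurableC; exact: measurable_walk_eq.
apply/seteqP; split=> t /=.
  move=> [_ hnu]; have H : hits xi t by apply: contrapT => /nu_nhits E; rewrite E in hnu.
  split=> // j hj /= E; have [_ N2] := nu_spec H.
  by have := N2 j (leq_ltn_trans hj hnu); rewrite E eqxx.
move=> [H Hj]; split=> //; have [N1 _] := nu_spec H.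
by rewrite ltnNge; apply/negP => hn; exact: (Hj _ hn N1).
Qed.

Lemma measurable_sum_nu (psi : nat -> T -> R) : (forall i, measurable_fun setT (psi i)) ->
  measurable_fun setT (fun t => \sum_(1 <= i < (nu xi t).+1) psi i t).
Proof.
move=> mpsi.
apply: (measurable_fun_cvg (h := fun K t => \sum_(1 <= i < K.+1) (i <= nu xi t)%:R * psi i t)).
  move=> K; apply: measurable_sum => i; apply: measurable_funM => //.
  exact/measurable_natr_bool/measurable_le_nu.
move=> t _; apply: cvg_near_cst; near=> K.
by apply: sum_nat_trunc; near: K; exact: nbhs_infty_ge.
Unshelve. all: by end_near. Qed.

Lemma measurable_down_below n i : measurable_fun setT (down_below xi n i).
Proof. by apply: measurable_and; apply: measurable_fun_ltr => //; exact: measurable_walk. Qed.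

Lemma measurable_u_n n : measurable_fun setT (u_n xi n).
Proof. by apply: measurable_sum_nu => i; exact/measurable_natr_bool/measurable_down_below. Qed.

Lemma measurable_v_n n : measurable_fun setT (v_n xi n).
Proof.
apply: measurable_sum_nu => i; apply: measurable_funM; first exact: measurable_walk.
exact/measurable_natr_bool/measurable_down_below.
Qed.

Lemma integral_unit_hits (f : T -> \bar R) : measurable_fun setT f -> (forall t, 0 <= f t)%E ->
  (\int[P]_t f t = \int[P]_(t in unit_hits) f t)%E.
Proof.
move=> mf f0; rewrite (ge0_negligible_integral _ _ _ _ P_not_unit_hits) //.
- by rewrite setTD setCK.
- exact/measurableC/measurable_unit_hits.
Qed.

Section RewardIntegral.
Variables (n : nat) (phi : nat -> R) (f : T -> R).
Hypotheses (phi_ge0 : forall x, 0 <= phi x) (phi_eq0 : forall x, (n < x)%N -> phi x = 0).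
Hypothesis f_reward : forall t, unit_hits t ->
  forall K, (nu xi t <= K)%N -> reward phi 0 (steps K t) = f t.

(* Monotone convergence along the reward of the first [K] steps. *)
Lemma integral_unit_hits_reward :
  (\int[P]_(t in unit_hits) (f t)%:E = (absorption p q n phi 0)%:E)%E.
Proof.
have reward0 s : 0 <= reward phi 0 s by exact: reward_ge0.
have cylf_lim t : unit_hits t -> (f t)%:E = limn (fun K => cylf K (reward phi 0) t).
  move=> Ht; apply/esym/cvg_lim => //; apply: cvg_near_cst; near=> K.
  rewrite cylfE => [|i]; last by case: (Ht.1 i); [left | right].
  by rewrite (f_reward Ht) //; near: K; exact: nbhs_infty_ge.
have -> : (\int[P]_(t in unit_hits) (f t)%:E =
    \int[P]_(t in unit_hits) limn (fun K => cylf K (reward phi 0) t))%E.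
  by apply: eq_integral => t /set_mem; exact: cylf_lim.
rewrite monotone_convergence //; first last.
- move=> t [U _] K m hKm; rewrite !cylfE ?lee_fin ?reward_steps_mono // => i; exact: U.
- by move=> K t _; exact: cylf_ge0.
- by move=> K; exact: measurable_cylf.
- exact: measurable_unit_hits.
rewrite (_ : (fun K => _) = EFin \o (fun K => Ebern p q K (reward phi 0))); last first.
  apply/funext => K /=; rewrite -integral_unit_hits ?integral_cylf //.
  - exact: measurable_cylf.
  - by move=> t; exact: cylf_ge0.
have cvgE := Ebern_reward_cvg hq hqp hpq phi_ge0 phi_eq0.
by rewrite EFin_lim ?(cvg_lim _ cvgE) //; apply/cvg_ex; eexists; exact: cvgE.
Unshelve. all: by end_near. Qed.

Hypothesis f_meas : measurable_fun setT f.

Lemma integrable_reward : P.-integrable setT (EFin \o f).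
Proof.
apply/integrableP; split; first exact/measurable_EFinP.
rewrite integral_unit_hits; last 2 first.
- exact/measurableT_comp/measurable_EFinP.
- by move=> t; exact: abse_ge0.
rewrite (eq_integral (fun t => (f t)%:E)) ?integral_unit_hits_reward ?ltry //.
move=> t /set_mem Ht /=; rewrite ger0_norm // -(f_reward Ht (leqnn _)).
exact: reward_ge0.
Qed.

Lemma integral_reward : (\int[P]_t (f t)%:E = (absorption p q n phi 0)%:E)%E.
Proof.
rewrite (negligible_integral _ _ integrable_reward P_not_unit_hits) //.
- by rewrite setTD setCK integral_unit_hits_reward.
- exact/measurableC/measurable_unit_hits.
Qed.

End RewardIntegral.

Lemma down_below_step n t i (x : nat) : unit_walk t -> walk xi i t = x%:R ->
  (down_below xi n i.+1 t)%:R = if xi i t == 1 then 0 else (x <= n)%:R :> R.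
Proof.
move=> U Hx; rewrite /down_below /= walkS Hx; case: (U i) => ->; rewrite ?eqxx ?N1_neq1.
  by rewrite gtrDl ltr10 andbF.
by rewrite gtrDl oppr_lt0 ltr01 andbT ltrBlDr natr1 ltr_nat ltnS.
Qed.

Lemma reward_u_n n t : unit_hits t -> forall K, (nu xi t <= K)%N ->
  reward (fun x => (x <= n)%:R) 0 (steps K t) = u_n xi n t.
Proof. by move=> Ht; apply: reward_steps => // i x; exact: down_below_step Ht.1. Qed.

(* [X_i + 1] is the height from which the down-step to [X_i] was taken. *)
Lemma reward_v_n n t : unit_hits t -> forall K, (nu xi t <= K)%N ->
  reward (fun x => x%:R * (x <= n)%:R) 0 (steps K t) = v_n xi n t + u_n xi n t.
Proof.
move=> Ht K hK; rewrite /v_n /u_n -big_split /=.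
under eq_bigr do rewrite -[X in _ + X]mul1r -mulrDl.
apply: reward_steps => // i x Hx; rewrite (down_below_step n Ht.1 Hx).
case: (Ht.1 i) => X; rewrite X ?eqxx ?mulr0 // N1_neq1.
by rewrite walkS Hx X addrNK.
Qed.

Section DownStepCounts.
Variable n : nat.

Let u_eq0 x : (n < x)%N -> (x <= n)%:R = 0 :> R.
Proof. by move=> hx; rewrite leqNgt hx. Qed.

Let w_eq0 x : (n < x)%N -> x%:R * (x <= n)%:R = 0 :> R.
Proof. by move/u_eq0 ->; rewrite mulr0. Qed.

Let w_ge0 x : 0 <= x%:R * (x <= n)%:R :> R.
Proof. exact: mulr_ge0. Qed.

Let measurable_vu_n : measurable_fun setT (fun t => v_n xi n t + u_n xi n t).
Proof. exact: measurable_funD (measurable_v_n n) (measurable_u_n n). Qed.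

Lemma integrable_u_n : P.-integrable setT (EFin \o u_n xi n).
Proof. exact: integrable_reward _ u_eq0 (reward_u_n n) (measurable_u_n n). Qed.

Lemma integrable_vu_n : P.-integrable setT (EFin \o (fun t => v_n xi n t + u_n xi n t)).
Proof. exact: integrable_reward w_ge0 w_eq0 (reward_v_n n) measurable_vu_n. Qed.

Lemma integral_u_n :
  (\int[P]_t (u_n xi n t)%:E = (p / (p - q) * (1 - (q / p) ^+ n.+1))%:E)%E.
Proof.
rewrite (integral_reward _ u_eq0 (reward_u_n n) (measurable_u_n n)) // absorption0.
congr EFin; rewrite -(sum_ratio_exp hq hqp n); apply: eq_big_nat => m /andP[_ hm].
by rewrite -ltnS hm mulr1.
Qed.

Lemma integral_v_n :
  (\int[P]_t (v_n xi n t)%:E =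
     (p / (p - q) ^+ 2 * (2 * q - p - (q + n%:R * (p - q)) * (q / p) ^+ n.+1))%:E)%E.
Proof.
rewrite (eq_integral (fun t => (v_n xi n t + u_n xi n t)%:E - (u_n xi n t)%:E)%E); last first.
  by move=> t _; rewrite -EFinB addrK.
rewrite integralB_EFin ?integrable_vu_n ?integrable_u_n //.
rewrite (integral_reward w_ge0 w_eq0 (reward_v_n n) measurable_vu_n).
rewrite (integral_reward _ u_eq0 (reward_u_n n) (measurable_u_n n)) // !absorption0 -EFinB.
congr EFin; rewrite -sumrB -(sum_ratio_exp_predn hq hqp n); apply: eq_big_nat => m /andP[_ hm].
by rewrite -ltnS hm mulr1 -mulrBr.
Qed.

End DownStepCounts.

End StepProcess.

Theorem lemma7 (R : realType) (d : measure_display) (T : measurableType d)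
  (P : probability T R) (xi : nat -> T -> R) (p q : R)
  (hq : 0 <= q) (hqp : q < p) (hpq : p + q = 1)
  (hmeas : forall i, measurable_fun setT (xi i))
  (hlaw : step_law P xi p q) (n : nat) :
  (\int[P]_t (u_n xi n t)%:E = (p / (p - q) * (1 - (q / p) ^+ n.+1))%:E)%E /\
  (\int[P]_t (v_n xi n t)%:E =
     (p / (p - q) ^+ 2 *
      (2 * q - p - (q + n%:R * (p - q)) * (q / p) ^+ n.+1))%:E)%E.
Proof.
by split; [apply: integral_u_n | apply: integral_v_n].
Qed.
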